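(* Let $\kappa > 0$ and let $(X,d)$ be a complete CAT$(\kappa)$ space such that $d(v,w) < \pi/(2\sqrt{\kappa})$ for all $v,w \in X$, and let $f : X \to (-\infty,\infty]$ be a proper, convex and lower semi-continuous function. Let $x \in X$ and suppose there is a sequence of positive real numbers $(\lambda_n)$ with $\lim_{n\to\infty}\lambda_n = \infty$ such that \[ \limsup_{n \to \infty} d(x, J_{\lambda_n} x) < \pi/(2\sqrt{\kappa}). \] Then $(J_\lambda x)_{\lambda > 0}$ converges to a minimum point of $f$ as $\lambda \to \infty$.
   Context: A CAT$(\kappa)$ space ($\kappa>0$) is a metric space in which any two points at distance $<\pi/\sqrt{\kappa}$ are joined by a geodesic and every geodesic triangle of perimeter $<2\pi/\sqrt{\kappa}$ satisfies the CAT$(\kappa)$ comparison inequality with respect to its comparison triangle in the sphere of constant curvature $\kappa$. Writing $(1-t)x+ty$ for the point at distance $t\,d(x,y)$ from $x$ on the geodesic from $x$ to $y$, $f$ is convex if $f((1-t)x+ty) \le (1-t)f(x)+tf(y)$ for all $x,y$, $t\in[0,1]$; proper means not identically $\infty$. For $x \in X$, $\Psi_x : X \to [0,\infty)$ is $\Psi_x(y) = \frac{1}{\kappa\cos(\sqrt{\kappa}\,d(y,x))} - \frac{\cos(\sqrt{\kappa}\,d(y,x))}{\kappa}$, and for $\lambda > 0$ the resolvent is $J_\lambda x = J^f_\lambda(x) = \operatorname{argmin}_{y \in X}\left[f(y) + \frac{1}{\lambda}\Psi_x(y)\right]$, which exists and is unique under the stated assumptions. *)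

From mathcomp Require Import all_boot all_order all_algebra.
From mathcomp Require Import all_classical all_reals all_analysis.
Set Implicit Arguments. Unset Strict Implicit. Unset Printing Implicit Defensive.
Import Order.TTheory GRing.Theory Num.Theory.
Local Open Scope ring_scope.

Section Defs.
Variable R : realType.

Definition is_metric (X : Type) (d : X -> X -> R) : Prop :=
  (forall x y, 0 <= d x y) /\ (forall x y, d x y = 0 <-> x = y) /\
  (forall x y, d x y = d y x) /\ (forall x y z, d x z <= d x y + d y z).

Definition cvg_seq (X : Type) (d : X -> X -> R) (u : nat -> X) (x : X) : Prop :=
  forall e : R, 0 < e -> exists N : nat, forall n, (N <= n)%N -> d (u n) x < e.

Definition cauchy_seq (X : Type) (d : X -> X -> R) (u : nat -> X) : Prop :=
  forall e : R, 0 < e -> exists N : nat, forall m n, (N <= m)%N -> (N <= n)%N ->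
    d (u m) (u n) < e.

Definition complete_metric (X : Type) (d : X -> X -> R) : Prop :=
  forall u, cauchy_seq d u -> exists x, cvg_seq d u x.

(** a geodesic from x to y: an isometric map of [0, d x y] (extended arbitrarily
    outside) with endpoints x and y *)
Definition geodesic (X : Type) (d : X -> X -> R) (x y : X) (g : R -> X) : Prop :=
  g 0 = x /\ g (d x y) = y /\
  forall s t, 0 <= s <= d x y -> 0 <= t <= d x y -> d (g s) (g t) = `|s - t|.

(** ** The model space M_kappa^2: the sphere of radius 1/sqrt kappa, realised as
    the unit sphere of R^3 with the intrinsic distance scaled by 1/sqrt kappa *)
Definition R3 := (R * R * R)%type.
Definition dot3 (u v : R3) : R := u.1.1 * v.1.1 + u.1.2 * v.1.2 + u.2 * v.2.
Definition on_sphere (u : R3) : Prop := dot3 u u = 1.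
Definition sphere_dist (kappa : R) (u v : R3) : R := acos (dot3 u v) / Num.sqrt kappa.

Definition cmp_point (kappa : R) (abar bbar : R3) (L s : R) (pbar : R3) : Prop :=
  on_sphere pbar /\ sphere_dist kappa abar pbar = s /\ sphere_dist kappa pbar bbar = L - s.

(** (p, pbar) : p is a point of the geodesic triangle with sides g1 = [x,y],
    g2 = [y,z], g3 = [z,x], and pbar its comparison point in the comparison
    triangle (xbar, ybar, zbar) *)
Definition tri_point (X : Type) (d : X -> X -> R) (kappa : R) (x y z : X)
    (g1 g2 g3 : R -> X) (xb yb zb : R3) (p : X) (pb : R3) : Prop :=
  (exists2 s, 0 <= s <= d x y & p = g1 s /\ cmp_point kappa xb yb (d x y) s pb) \/
  (exists2 s, 0 <= s <= d y z & p = g2 s /\ cmp_point kappa yb zb (d y z) s pb) \/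
  (exists2 s, 0 <= s <= d z x & p = g3 s /\ cmp_point kappa zb xb (d z x) s pb).

Definition CAT (kappa : R) (X : Type) (d : X -> X -> R) : Prop :=
  (forall x y, d x y < pi / Num.sqrt kappa -> exists g, geodesic d x y g) /\
  (forall (x y z : X) (g1 g2 g3 : R -> X),
     geodesic d x y g1 -> geodesic d y z g2 -> geodesic d z x g3 ->
     d x y + d y z + d z x < 2 * pi / Num.sqrt kappa ->
     exists xb yb zb : R3,
       [/\ on_sphere xb, on_sphere yb, on_sphere zb &
           [/\ sphere_dist kappa xb yb = d x y, sphere_dist kappa yb zb = d y z &
           sphere_dist kappa zb xb = d z x]] /\
           (forall p pb q qb,
             tri_point d kappa x y z g1 g2 g3 xb yb zb p pb ->
             tri_point d kappa x y z g1 g2 g3 xb yb zb q qb ->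
             d p q <= sphere_dist kappa pb qb)).

Local Open Scope ereal_scope.

Definition proper_fun (X : Type) (f : X -> \bar R) : Prop :=
  (forall x, f x != -oo) /\ exists x, f x != +oo.

Definition convex_fun (X : Type) (d : X -> X -> R) (f : X -> \bar R) : Prop :=
  forall x y g, geodesic d x y g -> forall t : R, (0 <= t <= 1)%R ->
    f (g (t * d x y)%R) <= (1 - t)%:E * f x + t%:E * f y.

Definition lsc_fun (X : Type) (d : X -> X -> R) (f : X -> \bar R) : Prop :=
  forall u x, cvg_seq d u x -> f x <= limn_einf (fun n => f (u n)).

Local Close Scope ereal_scope.

Definition Psi (kappa : R) (X : Type) (d : X -> X -> R) (x y : X) : R :=
  1 / (kappa * cos (Num.sqrt kappa * d y x)) - cos (Num.sqrt kappa * d y x) / kappa.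

Definition is_resolvent (kappa : R) (X : Type) (d : X -> X -> R) (f : X -> \bar R)
    (lambda : R) (x y : X) : Prop :=
  forall w, (f y + (Psi kappa d x y / lambda)%:E <= f w + (Psi kappa d x w / lambda)%:E)%E.

Definition is_minimum_point (X : Type) (f : X -> \bar R) (z : X) : Prop :=
  forall w, (f z <= f w)%E.

End Defs.

From mathcomp Require Import all_boot all_order all_algebra.
From mathcomp Require Import all_classical all_reals all_analysis.
From mathcomp Require Import ring lra.
Import Order.TTheory GRing.Theory Num.Theory numFieldNormedType.Exports.
Local Open Scope classical_set_scope.
Local Open Scope ring_scope.
Set Implicit Arguments. Unset Strict Implicit. Unset Printing Implicit Defensive.

(** Write [c v = cos (sqrt kappa * d v x)], so that [Psi_x v] is a decreasing
    function of [c v] and everything lives where [c > 0].  Resolvent monotonicity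
    says that [c (J l)] decreases and [f (J l)] decreases as [l] grows.  If [l <= m]
    and [p] is the midpoint of [J l] and [J m], convexity gives [f p <= f (J l)],
    so minimality of [J l] forces [c p <= c (J l)]; the CAT(kappa) comparison with
    the spherical midpoint gives
    [c (J l) + c (J m) <= 2 cos (sqrt kappa * d (J l) (J m) / 2) * c p].
    Hence [1 - cos (sqrt kappa * d (J l) (J m) / 2) <= (c (J l) - c (J m)) / (2 c (J l))].
    The limsup hypothesis bounds [c (J l)] below by a positive constant, so the
    monotone function [c (J l)] converges and [J] is Cauchy as [l -> oo].  The
    limit [z] minimises [f] by lower semicontinuity, since
    [f (J l) <= f w + Psi_x w / l]. *)

Section RealFacts.
Variable R : realType.

Lemma ler_cos_pi (a b : R) : 0 <= a -> a <= b -> b <= pi -> cos b <= cos a.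
Proof.
move=> a0 ab bpi.
have ia : a \in `[0, pi] by rewrite in_itv /= a0 (le_trans ab bpi).
have ib : b \in `[0, pi] by rewrite in_itv /= (le_trans a0 ab) bpi.
by rewrite leNgt (ltr_cos ib ia) -leNgt.
Qed.

Lemma cvgy_eventually_ge (u : R^nat) (A : R) :
  u @ \oo --> +oo -> exists N, forall n, (N <= n)%N -> A <= u n.
Proof.
move=> /cvgryPge/(_ A) [N _ HN].
by exists N => n Nn; apply: HN.
Qed.

Lemma limn_sup_lt_eventually (u : R^nat) (a : R) :
  bounded_fun u -> limn_sup u < a -> exists N, forall n, (N <= n)%N -> u n < a.
Proof.
move=> ub; rewrite (limn_supE ub) => infa.
have [_ [N _ <-] supNa] : exists2 y, range (sups u) y & y < a.
  by apply: inf_lt => //; exists (sups u 0), 0%N.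
exists N => n Nn; apply: le_lt_trans supNa.
apply: ub_le_sup; last by exists n.
exact/has_ubound_sdrop/bounded_fun_has_ubound.
Qed.

Lemma nonincreasing_lbound_cauchy (g : R -> R) (L : R) :
  (forall l m, 0 < l -> l <= m -> g m <= g l) -> (forall l, 0 < l -> L <= g l) ->
  forall e, 0 < e -> exists2 M, 0 < M &
    forall l m, M <= l -> l <= m -> g l - g m < e.
Proof.
move=> gnincr gL e e0.
pose S := [set g l | l in [set l | 0 < l]].
have Slb : has_lbound S by exists L => _ [l l0 <-]; exact: gL.
have S0 : S !=set0 by exists (g 1), 1 => //=; apply: ltr01.
have [_ [M M0 <-] gM] := inf_adherent e0 (conj S0 Slb).
exists M => // l m Ml lm.
have l0 : 0 < l by apply: lt_le_trans Ml.
have Sm : inf S <= g m by apply: ge_inf => //; exists m => //; apply: lt_le_trans lm.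
have := gnincr M l M0 Ml.
lra.
Qed.

End RealFacts.

Section Sphere.
Variable R : realType.

Lemma dot3C (u v : R3 R) : dot3 u v = dot3 v u.
Proof. by case: u => [[a b] c]; case: v => [[a' b'] c']; rewrite /dot3 /=; ring. Qed.

Lemma dot3_bound (u v : R3 R) : on_sphere u -> on_sphere v -> -1 <= dot3 u v <= 1.
Proof.
case: u => [[a b] c]; case: v => [[a' b'] c']; rewrite /on_sphere /dot3 /= => hu hv.
have h1 : 0 <= (a - a') ^+ 2 + (b - b') ^+ 2 + (c - c') ^+ 2.
  by rewrite !addr_ge0 // sqr_ge0.
have h2 : 0 <= (a + a') ^+ 2 + (b + b') ^+ 2 + (c + c') ^+ 2.
  by rewrite !addr_ge0 // sqr_ge0.
apply/andP; split; nra.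
Qed.

Definition scaled_sum3 (k : R) (u v : R3 R) : R3 R :=
  ((k * (u.1.1 + v.1.1), k * (u.1.2 + v.1.2)), k * (u.2 + v.2)).

Lemma dot3_scaled_sum3 k u v w :
  dot3 w (scaled_sum3 k u v) = k * (dot3 w u + dot3 w v).
Proof. by rewrite /dot3 /scaled_sum3 /=; ring. Qed.

Lemma dot3_scaled_sum3_self k u v : dot3 (scaled_sum3 k u v) (scaled_sum3 k u v) =
  k ^+ 2 * (dot3 u u + 2 * dot3 u v + dot3 v v).
Proof. by rewrite /dot3 /scaled_sum3 /=; ring. Qed.

Variable kappa : R.
Hypothesis kappa_gt0 : 0 < kappa.

Lemma sphere_dist_cos (u v : R3 R) (t : R) :
  on_sphere u -> on_sphere v -> sphere_dist kappa u v = t ->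
  dot3 u v = cos (Num.sqrt kappa * t).
Proof.
move=> hu hv <-; rewrite /sphere_dist.
have s0 : 0 < Num.sqrt kappa by rewrite sqrtr_gt0.
rewrite mulrC divfK ?gt_eqF // acosK //.
by have := dot3_bound hu hv; rewrite in_itv /=.
Qed.

(* The midpoint is [(yb + zb) / (2 cos (sqrt kappa * L / 2))], since
   [|yb + zb|^2 = 2 + 2 cos (sqrt kappa * L) = 4 cos^2 (sqrt kappa * L / 2)]. *)
Lemma sphere_midpoint (yb zb : R3 R) (L : R) :
  on_sphere yb -> on_sphere zb -> sphere_dist kappa yb zb = L ->
  Num.sqrt kappa * L < pi ->
  exists qb, cmp_point kappa yb zb L (2^-1 * L) qb /\
    forall w, 2 * cos (Num.sqrt kappa * (2^-1 * L)) * dot3 w qb =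
              dot3 w yb + dot3 w zb.
Proof.
move=> uy uz dyz Lpi.
have s0 : 0 < Num.sqrt kappa by rewrite sqrtr_gt0.
have L0 : 0 <= L.
  by rewrite -dyz /sphere_dist divr_ge0 ?acos_ge0 ?dot3_bound // ltW.
set h := cos (Num.sqrt kappa * (2^-1 * L)).
have pi0 := @pi_gt0 R.
have half : 0 <= Num.sqrt kappa * (2^-1 * L) < pi / 2.
  by apply/andP; split; [rewrite mulr_ge0 // mulr_ge0 | lra].
have h0 : 0 < h.
  by apply: cos_gt0_pihalf; case/andP: half => h1 h2; apply/andP; split; lra.
have cosL : dot3 yb zb = 2 * h ^+ 2 - 1.
  rewrite (sphere_dist_cos uy uz dyz).
  have -> : Num.sqrt kappa * L = (Num.sqrt kappa * (2^-1 * L)) *+ 2.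
    by rewrite mulr2n; field.
  by rewrite cos_mulr2n mulr_natl.
pose k := (2 * h)^-1.
have k2h : k * (2 * h) = 1 by rewrite mulVf // gt_eqF // mulr_gt0.
exists (scaled_sum3 k yb zb); split; last first.
  by move=> w; rewrite dot3_scaled_sum3 mulrA (mulrC _ k) k2h mul1r.
have uq : on_sphere (scaled_sum3 k yb zb).
  by rewrite /on_sphere dot3_scaled_sum3_self uy uz cosL; nra.
have acosh : acos h = Num.sqrt kappa * (2^-1 * L).
  by rewrite cosK // in_itv /=; case/andP: half => -> /=; lra.
have distq u : dot3 u (scaled_sum3 k yb zb) = h ->
    sphere_dist kappa u (scaled_sum3 k yb zb) = 2^-1 * L.
  by rewrite /sphere_dist => ->; rewrite acosh mulrC mulKf // gt_eqF.
split=> //; split.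
  by apply: distq; rewrite dot3_scaled_sum3 uy cosL; nra.
rewrite /sphere_dist dot3C -/(sphere_dist _ _ _) distq; first by field.
by rewrite dot3_scaled_sum3 uz dot3C cosL; nra.
Qed.

End Sphere.

Section CATMidpoint.
Variables (R : realType) (kappa : R) (X : Type) (d : X -> X -> R).
Hypotheses (kappa_gt0 : 0 < kappa) (dmetric : is_metric d) (dCAT : CAT kappa d).

(* Compare with the spherical midpoint [qb]: [d p x <= sphere_dist xb qb] gives
   [cos (sqrt kappa * d p x) >= <xb, qb>], and [<xb, qb>] is read off [sphere_midpoint]. *)
Lemma CAT_midpoint_cos (x y z : X) (g : R -> X) :
  geodesic d y z g -> d x y + d y z + d z x < 2 * pi / Num.sqrt kappa ->
  cos (Num.sqrt kappa * d y x) + cos (Num.sqrt kappa * d z x) <=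
  2 * cos (Num.sqrt kappa * (2^-1 * d y z)) *
    cos (Num.sqrt kappa * d (g (2^-1 * d y z)) x).
Proof.
move=> gyz perim.
case: dmetric => d0 [_ [dC dT]]; case: dCAT => geo cat.
have s0 : 0 < Num.sqrt kappa by rewrite sqrtr_gt0.
have pi0 := @pi_gt0 R.
have side u v w : d u v <= d v w + d w u -> d u v + d v w + d w u < 2 * pi / Num.sqrt kappa ->
    d u v < pi / Num.sqrt kappa.
  by move=> tri; rewrite -mulrA; lra.
have dxy : d x y < pi / Num.sqrt kappa.
  by apply: side perim; rewrite [d z x]dC [d y z]dC addrC; apply: dT.
have dzx : d z x < pi / Num.sqrt kappa.
  apply: (side z x y); last lra.
  by rewrite [d x y]dC [d y z]dC addrC; apply: dT.
have dyz : d y z < pi / Num.sqrt kappa.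
  apply: (side y z x); last lra.
  by rewrite [d z x]dC [d x y]dC addrC; apply: dT.
have [g1 G1] := geo x y dxy.
have [g3 G3] := geo z x dzx.
have [xb [yb [zb [[ux uy uz [sxy syz szx]] cmp]]]] := cat x y z g1 g g3 G1 gyz G3 perim.
have dyzpi : Num.sqrt kappa * d y z < pi by rewrite mulrC -ltr_pdivlMr.
have [qb [qcmp qdot]] := sphere_midpoint kappa_gt0 uy uz syz dyzpi.
set p := g (2^-1 * d y z).
have tx : tri_point d kappa x y z g1 g g3 xb yb zb x xb.
  left; exists 0; first by rewrite lexx d0.
  split; first by case: G1.
  by split=> //; rewrite subr0 /sphere_dist ux acos1 mul0r.
have tp : tri_point d kappa x y z g1 g g3 xb yb zb p qb.
  right; left; exists (2^-1 * d y z); last by split.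
  by apply/andP; split; have := d0 y z; lra.
have dxp : Num.sqrt kappa * d p x <= acos (dot3 xb qb).
  by rewrite dC -ler_pdivlMl // mulrC; apply: cmp _ _ _ _ tx tp.
have qbnd := dot3_bound ux qcmp.1.
have h0 : 0 <= cos (Num.sqrt kappa * (2^-1 * d y z)).
  by apply: cos_ge0_pihalf; apply/andP; split; have := d0 y z; nra.
rewrite (dC y x) -(sphere_dist_cos kappa_gt0 ux uy sxy).
rewrite -(sphere_dist_cos kappa_gt0 uz ux szx) (dot3C zb) -qdot.
rewrite ler_wpM2l ?mulr_ge0 //.
rewrite -[X in X <= _]acosK ?in_itv //=.
by apply: ler_cos_pi; [rewrite mulr_ge0 // ltW | | exact: acos_lepi].
Qed.

End CATMidpoint.

Section MetricFacts.
Variables (R : realType) (X : Type) (d : X -> X -> R).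

Lemma lsc_le_of_eventually_le (f : X -> \bar R) (u : nat -> X) (z : X) (a : \bar R) :
  lsc_fun d f -> cvg_seq d u z ->
  (forall e, 0 < e -> exists N, forall n, (N <= n)%N -> (f (u n) <= a + e%:E)%E) ->
  (f z <= a)%E.
Proof.
move=> flsc uz ev; apply/lee_addgt0Pr => e e0.
apply: le_trans (flsc _ _ uz) _.
rewrite limn_einf_lim; apply: lime_le; first exact: is_cvg_einfs.
have [N HN] := ev e e0.
exists N => // n /= Nn.
by apply: le_trans (ereal_inf_lbound _) (HN n Nn); exists n => /=.
Qed.

Definition cauchy_at_infty (J : R -> X) := forall e, 0 < e -> exists2 M, 0 < M &
  forall l m, M <= l -> M <= m -> d (J l) (J m) < e.

Variables (J : R -> X) (lam : nat -> R).
Hypothesis Jcauchy : cauchy_at_infty J.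
Hypothesis lam_oo : lam @ \oo --> +oo.

Lemma cauchy_seq_comp : cauchy_seq d (fun n => J (lam n)).
Proof.
move=> e e0; have [M _ HM] := Jcauchy e0.
have [N HN] := cvgy_eventually_ge M lam_oo.
by exists N => m n Nm Nn; apply: HM; apply: HN.
Qed.

Lemma cvg_at_infty_of_cauchy (z : X) : is_metric d ->
  cvg_seq d (fun n => J (lam n)) z ->
  forall e, 0 < e -> exists M : R, forall l : R, M < l -> d (J l) z < e.
Proof.
case=> _ [_ [_ dT]] Jz e e0.
have e20 : 0 < e / 2 by rewrite divr_gt0.
have [M _ HM] := Jcauchy e20.
have [N1 HN1] := Jz _ e20.
have [N2 HN2] := cvgy_eventually_ge M lam_oo.
exists M => l Ml; pose n := maxn N1 N2.
apply: le_lt_trans (dT _ (J (lam n)) _) _.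
have := HM l (lam n) (ltW Ml) (HN2 n (leq_maxr _ _)).
have := HN1 n (leq_maxl _ _).
lra.
Qed.

End MetricFacts.

Section Resolvent.
Variables (R : realType) (kappa : R) (X : Type) (d : X -> X -> R).
Variables (f : X -> \bar R) (x : X) (J : R -> X).
Hypotheses (kappa_gt0 : 0 < kappa) (dmetric : is_metric d) (dCAT : CAT kappa d).
Hypothesis diam : forall v w, d v w < pi / (2 * Num.sqrt kappa).
Hypotheses (fproper : proper_fun f) (fconvex : convex_fun d f).
Hypothesis Jres : forall l, 0 < l -> is_resolvent kappa d f l x (J l).

Local Notation cosd v := (cos (Num.sqrt kappa * d v x)).

Let sqrtk_gt0 : 0 < Num.sqrt kappa. Proof. by rewrite sqrtr_gt0. Qed.

Lemma scaled_lt_pihalf r : r < pi / (2 * Num.sqrt kappa) -> Num.sqrt kappa * r < pi / 2.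
Proof.
have -> : pi / 2 = Num.sqrt kappa * (pi / (2 * Num.sqrt kappa)).
  by field; rewrite gt_eqF.
by rewrite ltr_pM2l.
Qed.

Lemma scaled_dist_lt_pihalf v w : 0 <= Num.sqrt kappa * d v w < pi / 2.
Proof.
case: dmetric => d0 _; apply/andP; split; first by rewrite mulr_ge0 // ltW.
exact: scaled_lt_pihalf.
Qed.

Lemma dist_lt_pi v w : d v w < pi / Num.sqrt kappa.
Proof.
apply: lt_le_trans (diam v w) _.
have : 0 < pi / Num.sqrt kappa by rewrite divr_gt0 ?pi_gt0.
rewrite invfM mulrA mulrAC; lra.
Qed.

Lemma perimeter_lt u v w : d u v + d v w + d w u < 2 * pi / Num.sqrt kappa.
Proof.
have := diam u v; have := diam v w; have := diam w u.
have -> : pi / (2 * Num.sqrt kappa) = (2 * pi / Num.sqrt kappa) / 4.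
  by field; rewrite gt_eqF.
have : 0 < 2 * pi / Num.sqrt kappa by rewrite divr_gt0 ?mulr_gt0 ?pi_gt0.
lra.
Qed.

Lemma cosd_gt0 v : 0 < cosd v.
Proof.
apply: cos_gt0_pihalf; have := scaled_dist_lt_pihalf v x.
by have := @pi_gt0 R; move=> pi0 /andP[h1 h2]; apply/andP; split; lra.
Qed.

Lemma Psi_ge0 v : 0 <= Psi kappa d x v.
Proof.
rewrite /Psi; have c0 := cosd_gt0 v; have c1 := cos_le1 (Num.sqrt kappa * d v x).
have -> : 1 / (kappa * cosd v) - cosd v / kappa = (1 - cosd v ^+ 2) / (kappa * cosd v).
  by field; rewrite !gt_eqF.
apply: divr_ge0; last by rewrite mulr_ge0 // ltW.
by rewrite subr_ge0 expr_le1 // ltW.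
Qed.

Lemma cosd_le_of_Psi_le v w : Psi kappa d x v <= Psi kappa d x w -> cosd w <= cosd v.
Proof.
rewrite /Psi => Psivw; rewrite leNgt; apply/negP => cvw.
have cv := cosd_gt0 v; have cw := cosd_gt0 w.
have E : (1 / (kappa * cosd v) - cosd v / kappa) - (1 / (kappa * cosd w) - cosd w / kappa) =
    (cosd w - cosd v) * (1 / (kappa * cosd v * cosd w) + 1 / kappa).
  by field; rewrite !gt_eqF.
have : 0 < (cosd w - cosd v) * (1 / (kappa * cosd v * cosd w) + 1 / kappa).
  by rewrite mulr_gt0 ?subr_gt0 // addr_gt0 // divr_gt0 // !mulr_gt0.
rewrite -E; lra.
Qed.

Lemma resolvent_fin l : 0 < l -> f (J l) \is a fin_num.
Proof.
move=> l0; case: fproper => fnN [w fw]; rewrite fin_numE fnN /=.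
have fwfin : f w \is a fin_num by rewrite fin_numE fnN fw.
by have := Jres l0 w; rewrite -(fineK fwfin) -EFinD; case: (f (J l)).
Qed.

Lemma resolvent_le l w : 0 < l -> f w \is a fin_num ->
  fine (f (J l)) + Psi kappa d x (J l) / l <= fine (f w) + Psi kappa d x w / l.
Proof.
move=> l0 fw; have := Jres l0 w.
by rewrite -(fineK (resolvent_fin l0)) -(fineK fw) -!EFinD lee_fin.
Qed.

Lemma resolvent_le_Psi l w : 0 < l -> (f (J l) <= f w + (Psi kappa d x w / l)%:E)%E.
Proof.
move=> l0; apply: le_trans (Jres l0 w).
by rewrite leeDl // lee_fin divr_ge0 ?Psi_ge0 ?ltW.
Qed.

Lemma resolvent_mono l m : 0 < l -> l <= m ->
  cosd (J m) <= cosd (J l) /\ fine (f (J m)) <= fine (f (J l)).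
Proof.
move=> l0; rewrite le_eqVlt => /orP[/eqP <-|lm]; first by split.
have m0 : 0 < m by apply: lt_trans lm.
have hl := resolvent_le l0 (resolvent_fin m0).
have hm := resolvent_le m0 (resolvent_fin l0).
have ml : m^-1 < l^-1 by rewrite ltf_pV2 ?posrE.
have minv_gt0 : 0 < m^-1 by rewrite invr_gt0.
have PsiJ : Psi kappa d x (J l) <= Psi kappa d x (J m).
  by rewrite -(@ler_pM2r _ (l^-1 - m^-1)) ?subr_gt0 //; move: hl hm; nra.
split; first exact: cosd_le_of_Psi_le.
by move: hl hm; nra.
Qed.

Lemma resolvent_midpoint_cos l m : 0 < l -> l <= m ->
  cosd (J l) + cosd (J m) <=
  2 * cos (Num.sqrt kappa * (2^-1 * d (J l) (J m))) * cosd (J l).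
Proof.
move=> l0 lm; have m0 : 0 < m by apply: lt_le_trans lm.
have [g G] := dCAT.1 (J l) (J m) (dist_lt_pi _ _).
set p := g (2^-1 * d (J l) (J m)).
have [_ Fml] := resolvent_mono l0 lm.
have fp : (f p <= ((1 - 2^-1) * fine (f (J l)) + 2^-1 * fine (f (J m)))%:E)%E.
  have half : 0 <= (2 : R)^-1 <= 1 by apply/andP; split; lra.
  have := fconvex G half.
  by rewrite -(fineK (resolvent_fin l0)) -(fineK (resolvent_fin m0)) -!EFinM -EFinD.
have pfin : f p \is a fin_num.
  by rewrite fin_numE fproper.1 /=; move: fp; case: (f p).
have Fp : fine (f p) <= fine (f (J l)).
  by move: fp; rewrite -(fineK pfin) lee_fin; lra.
have cp : cosd p <= cosd (J l).
  apply: cosd_le_of_Psi_le.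
  rewrite -(@ler_pM2r _ l^-1) ?invr_gt0 //.
  by have := resolvent_le l0 pfin; lra.
have h0 : 0 <= cos (Num.sqrt kappa * (2^-1 * d (J l) (J m))).
  apply: cos_ge0_pihalf; have := scaled_dist_lt_pihalf (J l) (J m).
  by have := @pi_gt0 R; move=> pi0 /andP[h1 h2]; apply/andP; split; nra.
apply: le_trans (CAT_midpoint_cos kappa_gt0 dmetric dCAT G (perimeter_lt x _ _)) _.
by rewrite ler_wpM2l ?mulr_ge0.
Qed.

Lemma resolvent_cos_lbound (lam : nat -> R) : lam @ \oo --> +oo ->
  limn_sup (fun n => d x (J (lam n))) < pi / (2 * Num.sqrt kappa) ->
  exists2 L0, 0 < L0 & forall l, 0 < l -> L0 <= cosd (J l).
Proof.
move=> lamoo limsup; case: dmetric => d0 [_ [dC _]].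
pose r := (limn_sup (fun n => d x (J (lam n))) + pi / (2 * Num.sqrt kappa)) / 2.
have ubd : bounded_fun (fun n => d x (J (lam n))).
  exists (pi / (2 * Num.sqrt kappa)); split; first exact: num_real.
  move=> M DM n _ /=; rewrite ger0_norm ?d0 //.
  exact/ltW/(lt_trans (diam _ _) DM).
have limsup_r : limn_sup (fun n => d x (J (lam n))) < r by rewrite /r; lra.
have [N HN] := limn_sup_lt_eventually ubd limsup_r.
have r0 : 0 <= r by apply: le_trans (d0 _ _) (ltW (HN N (leqnn N))).
have sr : Num.sqrt kappa * r < pi / 2 by apply: scaled_lt_pihalf; rewrite /r; lra.
have sr0 : 0 <= Num.sqrt kappa * r by rewrite mulr_ge0 // ltW.
have pi0 := @pi_gt0 R.
exists (cos (Num.sqrt kappa * r)).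
  by apply: cos_gt0_pihalf; apply/andP; split; lra.
move=> l l0; have [N' HN'] := cvgy_eventually_ge l lamoo.
pose n := maxn N N'.
have [cJ _] := resolvent_mono l0 (HN' n (leq_maxr _ _)).
apply: le_trans cJ; apply: ler_cos_pi.
- exact: mulr_ge0 (ltW sqrtk_gt0) (d0 _ _).
- by rewrite ler_pM2l // dC ltW // HN // leq_maxl.
- lra.
Qed.

Lemma resolvent_cauchy (L0 : R) : 0 < L0 -> (forall l, 0 < l -> L0 <= cosd (J l)) ->
  cauchy_at_infty d J.
Proof.
move=> L00 L0le e e0; case: dmetric => _ [_ [dC _]].
have pi0 := @pi_gt0 R.
pose e1 := Num.min (Num.sqrt kappa * e / 2) 1.
have e10 : 0 < e1 by rewrite lt_min ltr01 andbT divr_gt0 ?mulr_gt0.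
have e1le : e1 <= Num.sqrt kappa * e / 2 by rewrite ge_min lexx.
have e1pi : e1 \in `[0, pi].
  by rewrite in_itv /= (ltW e10) ge_min; apply/orP; right; have := @pi_ge2 R; lra.
have zpi : (0 : R) \in `[0, pi] by rewrite in_itv /= lexx (ltW pi0).
have ce1 : cos e1 < 1 by rewrite -cos0 ltr_cos.
have cosJ_mono l m : 0 < l -> l <= m -> cosd (J m) <= cosd (J l).
  by move=> l0 lm; case: (resolvent_mono l0 lm).
have dl0 : 0 < 2 * L0 * (1 - cos e1) by rewrite !mulr_gt0 // subr_gt0.
have [M M0 HM] := nonincreasing_lbound_cauchy (g := fun l => cosd (J l)) cosJ_mono L0le dl0.
exists M => // l m Ml Mm.
wlog lm : l m Ml Mm / l <= m.
  move=> H; case: (leP l m) => [|/ltW ml]; first exact: H.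
  by rewrite dC; apply: H.
have l0 : 0 < l by apply: lt_le_trans Ml.
have key := resolvent_midpoint_cos l0 lm.
have small := HM l m Ml lm.
have Ll := L0le l l0.
have := scaled_dist_lt_pihalf (J l) (J m).
set C := d (J l) (J m) in key *; move=> /andP[C0 Cpi].
set h := cos (Num.sqrt kappa * (2^-1 * C)) in key.
have h1 : h <= 1 by apply: cos_le1.
have hL : (1 - h) * L0 <= (1 - h) * cosd (J l) by rewrite ler_wpM2l // subr_ge0.
have : (1 - h) * L0 < (1 - cos e1) * L0 by nra.
rewrite ltr_pM2r // ltrD2l ltrN2 ltr_cos // => [halfe1|]; last first.
  by rewrite in_itv /=; apply/andP; split; nra.
have : Num.sqrt kappa * C < Num.sqrt kappa * e by lra.
by rewrite ltr_pM2l.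
Qed.

Lemma resolvent_limit_is_minimum (lam : nat -> R) (z : X) :
  lsc_fun d f -> (forall n, 0 < lam n) -> lam @ \oo --> +oo ->
  cvg_seq d (fun n => J (lam n)) z -> is_minimum_point f z.
Proof.
move=> flsc lam0 lamoo Jz w; case fwE: (f w) => [r| |]; last 2 first.
- by rewrite leey.
- by have := fproper.1 w; rewrite fwE.
apply: (lsc_le_of_eventually_le flsc Jz) => e e0.
have [N HN] := cvgy_eventually_ge (Psi kappa d x w / e) lamoo.
exists N => n Nn; apply: le_trans (resolvent_le_Psi w (lam0 n)) _.
by rewrite fwE -EFinD lee_fin lerD2l ler_pdivrMr // mulrC -ler_pdivrMr // HN.
Qed.

End Resolvent.

Theorem mainTheorem4 (R : realType) (kappa : R) (X : Type) (d : X -> X -> R)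
    (f : X -> \bar R) (J : R -> X) (x : X) (lam : nat -> R) :
  0 < kappa ->
  is_metric d -> complete_metric d -> CAT kappa d ->
  (forall v w, d v w < pi / (2 * Num.sqrt kappa)) ->
  proper_fun f -> convex_fun d f -> lsc_fun d f ->
  (* J lambda = J_lambda x, the resolvent of f at x, for all lambda > 0 *)
  (forall lambda, 0 < lambda -> is_resolvent kappa d f lambda x (J lambda)) ->
  (forall n, 0 < lam n) ->
  lam @ \oo --> +oo ->
  (limn_sup (fun n => d x (J (lam n))) < pi / (2 * Num.sqrt kappa)) ->
  exists z : X, is_minimum_point f z /\
    (forall e : R, 0 < e -> exists M : R, forall lambda : R, M < lambda ->
       d (J lambda) z < e).
Proof.
move=> k0 dm complete dcat diam fproper fconvex flsc Jres lam0 lamoo limsup.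
have [L0 L00 L0le] := resolvent_cos_lbound k0 dm diam fproper Jres lamoo limsup.
have Jcauchy : cauchy_at_infty d J :=
  resolvent_cauchy k0 dm dcat diam fproper fconvex Jres L00 L0le.
have [z Jz] := complete _ (cauchy_seq_comp Jcauchy lamoo).
have zmin := resolvent_limit_is_minimum k0 dm diam fproper Jres flsc lam0 lamoo Jz.
exists z; split=> // e e0.
by have [M HM] := cvg_at_infty_of_cauchy Jcauchy lamoo dm Jz e0; exists M.
Qed.
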